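(* Let $r,s\ge2$ be integers satisfying $r\ge3$ if $s=2$, $r\ge2$ if $s\in\{3,4\}$, and $r\ge s-1$ if $s\ge5$. Let \[ \alpha_0=\frac{1}{r(s-1)},\qquad \beta_0=\frac{rs-r-s}{r(s-1)}. \] Then $(\alpha_0,\beta_0)$ is a local maximiser of $\varphi$ on $K$, and the Hessian of $\varphi$ at $(\alpha_0,\beta_0)$ is strictly negative definite.
   Context: Let $g(x)=x\log x$ for $x>0$, with $g(0)=0$. Let \[ K=\{(\alpha,\beta)\in\mathbb R^2:\alpha,\beta\ge0,\ (s-1)\alpha+\beta\le1\}. \] Define $\varphi:K\to\mathbb R$ by \begin{align*} \varphi(\alpha,\beta)&=(\alpha+\beta)\log(r-1)+g(\alpha+\beta)+g(r-1-\alpha-\beta)-\tfrac{2}{s-1}g(\beta)-g(\alpha)\\ &\quad-\tfrac{1}{s(s-1)}g(rs-r-s-s\beta)-\tfrac{1}{s-1}g(1-(s-1)\alpha-\beta). \end{align*} *)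

From Stdlib Require Import Reals.
From Coquelicot Require Import Coquelicot.
Open Scope R_scope.

(* g(x) = x log x for x > 0, g(0) = 0.  The paper leaves g undefined for
   x < 0; we set it to 0 there (irrelevant near the point of interest). *)
Definition g (x : R) : R := if Rlt_dec 0 x then x * ln x else 0.

Definition inK (s a b : R) : Prop :=
  0 <= a /\ 0 <= b /\ (s - 1) * a + b <= 1.

Definition phi (r s a b : R) : R :=
  (a + b) * ln (r - 1) + g (a + b) + g (r - 1 - a - b)
  - (2 / (s - 1)) * g b - g a
  - (1 / (s * (s - 1))) * g (r * s - r - s - s * b)
  - (1 / (s - 1)) * g (1 - (s - 1) * a - b).

Definition d_aa (f : R -> R -> R) (a0 b0 : R) : R :=
  Derive (fun a => Derive (fun a' => f a' b0) a) a0.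
Definition d_bb (f : R -> R -> R) (a0 b0 : R) : R :=
  Derive (fun b => Derive (fun b' => f a0 b') b) b0.
Definition d_ab (f : R -> R -> R) (a0 b0 : R) : R :=
  Derive (fun b => Derive (fun a => f a b) a0) b0.
Definition d_ba (f : R -> R -> R) (a0 b0 : R) : R :=
  Derive (fun a => Derive (fun b => f a b) b0) a0.

Definition hessian_neg_def (f : R -> R -> R) (a0 b0 : R) : Prop :=
  forall u v : R, (u, v) <> (0, 0) ->
    u * u * d_aa f a0 b0 + u * v * d_ab f a0 b0
    + v * u * d_ba f a0 b0 + v * v * d_bb f a0 b0 < 0.

From Stdlib Require Import Reals Lra Lia Psatz.
From Coquelicot Require Import Coquelicot.
Open Scope R_scope.

(* Near the point all six arguments of g are positive and phi is smooth.  Two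
   of its g-terms, g(a+b) and g(r-1-a-b), enter with sign +, the other four
   with sign -.  Writing phi(a,b) - phi(a0,b0) as its first-order Taylor
   polynomial plus Bregman divergences of x ln x, and using that such a
   divergence is (y-x)^2/(2x) up to factors 2 -+ d when y is within relative
   distance d of x, reduces local maximality at a critical point to a
   "curvature gap": the quadratic form curv_neg of the concave terms exceeds
   M (u+v)^2 for some M larger than the coefficient curv_pos of the convex
   terms.  The same gap makes the Hessian curv_pos (u+v)^2 - curv_neg
   negative definite. *)

Lemma sign_of_nondecreasing_at_one (f df : R -> R) (t : R) :
  0 < t ->
  (forall x, 0 < x -> is_derive f x (df x)) ->
  (forall x, 0 < x -> 0 <= df x) ->
  f 1 = 0 -> 0 <= (t - 1) * f t.
Proof.
  intros Ht Hder Hdf Hf1.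
  assert (Hmin : 0 < Rmin 1 t) by (apply Rmin_glb_lt; lra).
  destruct (MVT_gen f 1 t df) as (c & Hc & Hmvt).
  - intros x Hx; apply Hder; lra.
  - intros x Hx. apply continuity_pt_filterlim.
    apply (ex_derive_continuous (V := R_NormedModule)).
    exists (df x); apply Hder; lra.
  - rewrite Hf1, Rminus_0_r in Hmvt. rewrite Hmvt.
    replace ((t - 1) * (df c * (t - 1))) with (df c * (t - 1) ^ 2) by ring.
    apply Rmult_le_pos; [apply Hdf; lra | apply pow2_ge_0].
Qed.

(* F(t) = t ln t - t + 1, the gap between t ln t and its tangent at t = 1. *)
Definition xlnx_defect (t : R) : R := t * ln t - t + 1.

(* F(t) - (t-1)^2/(t+1) has the sign of t - 1; equivalently
   ln t >= 2(t-1)/(t+1) exactly when t >= 1. *)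
Lemma xlnx_defect_vs_harmonic (t : R) :
  0 < t -> 0 <= (t - 1) * (xlnx_defect t - (t - 1) ^ 2 / (t + 1)).
Proof.
  intros Ht.
  pose proof (sign_of_nondecreasing_at_one (fun x => ln x - 2 * (x - 1) / (x + 1))
    (fun x => (x - 1) ^ 2 / (x * (x + 1) ^ 2)) t Ht) as Hsign.
  replace ((t - 1) * (xlnx_defect t - (t - 1) ^ 2 / (t + 1)))
    with (t * ((t - 1) * (ln t - 2 * (t - 1) / (t + 1))))
    by (unfold xlnx_defect; field; lra).
  apply Rmult_le_pos; [lra | apply Hsign].
  - intros x Hx. auto_derive; [repeat split; lra | field; lra].
  - intros x Hx. apply Rmult_le_pos; [apply pow2_ge_0 |].
    apply Rlt_le, Rinv_0_lt_compat, Rmult_lt_0_compat; [lra | apply pow_lt; lra].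
  - rewrite ln_1; field.
Qed.

(* (t-1)^2/2 - F(t) has the sign of t - 1; equivalently
   ln t <= (t - 1/t)/2 exactly when t >= 1. *)
Lemma xlnx_defect_vs_half (t : R) :
  0 < t -> 0 <= (t - 1) * ((t - 1) ^ 2 / 2 - xlnx_defect t).
Proof.
  intros Ht.
  pose proof (sign_of_nondecreasing_at_one (fun x => (x - 1 / x) / 2 - ln x)
    (fun x => (x - 1) ^ 2 / (2 * x ^ 2)) t Ht) as Hsign.
  replace ((t - 1) * ((t - 1) ^ 2 / 2 - xlnx_defect t))
    with (t * ((t - 1) * ((t - 1 / t) / 2 - ln t)))
    by (unfold xlnx_defect; field; lra).
  apply Rmult_le_pos; [lra | apply Hsign].
  - intros x Hx. auto_derive; [repeat split; lra | field; lra].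
  - intros x Hx. apply Rmult_le_pos; [apply pow2_ge_0 |].
    apply Rlt_le, Rinv_0_lt_compat, Rmult_lt_0_compat; [lra | apply pow_lt; lra].
  - rewrite ln_1; field.
Qed.

Lemma xlnx_defect_bounds (t d : R) :
  0 < t -> 0 <= d < 1 -> Rabs (t - 1) <= d ->
  (t - 1) ^ 2 / (2 + d) <= xlnx_defect t <= (t - 1) ^ 2 / (2 - d).
Proof.
  intros Ht Hd Htd. apply Rabs_le_between in Htd.
  pose proof (xlnx_defect_vs_harmonic t Ht) as Hh.
  pose proof (xlnx_defect_vs_half t Ht) as H2.
  set (q := (t - 1) ^ 2) in *.
  assert (Hq : 0 <= q) by apply pow2_ge_0.
  assert (q / (2 + d) <= q / (t + 1) <= q / (2 - d) /\ q / (2 + d) <= q / 2 <= q / (2 - d))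
    as [[B1 B2] [B3 B4]].
  { unfold Rdiv; repeat split; apply Rmult_le_compat_l; auto;
      apply Rinv_le_contravar; lra. }
  destruct (Rtotal_order t 1) as [Hlt | [Heq | Hgt]].
  - assert (xlnx_defect t <= q / (t + 1)) by nra.
    assert (q / 2 <= xlnx_defect t) by nra. lra.
  - subst q; rewrite Heq; unfold xlnx_defect; rewrite ln_1.
    replace ((1 - 1) ^ 2) with 0 by ring. unfold Rdiv; rewrite !Rmult_0_l; lra.
  - assert (q / (t + 1) <= xlnx_defect t) by nra.
    assert (xlnx_defect t <= q / 2) by nra. lra.
Qed.

Definition rel_close (d x0 x : R) : Prop := Rabs (x - x0) <= d * x0.

Lemma rel_close_pos (d x0 x : R) : 0 < x0 -> d < 1 -> rel_close d x0 x -> 0 < x.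
Proof.
  unfold rel_close; intros Hx0 Hd Hx. apply Rabs_le_between in Hx. nra.
Qed.

Definition xlnx_bregman (x y : R) : R := y * ln y - x * ln x - (ln x + 1) * (y - x).

(* Bregman(x, y) = x F(y/x), hence it is (y-x)^2/(2x) up to the factors 2 -+ d. *)
Lemma xlnx_bregman_bounds (d x y : R) :
  0 < x -> 0 <= d < 1 -> rel_close d x y ->
  (y - x) ^ 2 / ((2 + d) * x) <= xlnx_bregman x y <= (y - x) ^ 2 / ((2 - d) * x).
Proof.
  intros Hx Hd Hxy.
  assert (Hy : 0 < y) by (apply (rel_close_pos d x y Hx); [lra | exact Hxy]).
  unfold rel_close in Hxy.
  set (t := y / x).
  assert (Hyt : y = x * t) by (unfold t; field; lra).
  assert (Ht : 0 < t) by (unfold t; apply Rdiv_lt_0_compat; lra).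
  assert (Htd : Rabs (t - 1) <= d).
  { apply Rmult_le_reg_l with x; [exact Hx |].
    rewrite <- (Rabs_pos_eq x) at 1 by lra. rewrite <- Rabs_mult.
    replace (x * (t - 1)) with (y - x) by (rewrite Hyt; ring). lra. }
  destruct (xlnx_defect_bounds t d Ht Hd Htd) as [Hlo Hhi].
  replace (xlnx_bregman x y) with (x * xlnx_defect t)
    by (unfold xlnx_bregman, xlnx_defect; rewrite Hyt, ln_mult by lra; ring).
  replace ((y - x) ^ 2 / ((2 + d) * x)) with (x * ((t - 1) ^ 2 / (2 + d)))
    by (rewrite Hyt; field; lra).
  replace ((y - x) ^ 2 / ((2 - d) * x)) with (x * ((t - 1) ^ 2 / (2 - d)))
    by (rewrite Hyt; field; lra).
  split; apply Rmult_le_compat_l; lra.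
Qed.

Lemma locally_2d_rel_close (l : R -> R -> R) (c p q d x0 y0 : R) :
  (forall x y, l x y = c + p * x + q * y) -> 0 < d -> 0 < l x0 y0 ->
  locally_2d (fun x y => rel_close d (l x0 y0) (l x y)) x0 y0.
Proof.
  intros Hl_aff Hd Hl. rewrite !Hl_aff in *. set (l0 := c + p * x0 + q * y0) in *.
  pose proof (Rabs_pos p) as Hp. pose proof (Rabs_pos q) as Hq.
  assert (Hdelta : 0 < d * l0 / (Rabs p + Rabs q + 1)).
  { apply Rdiv_lt_0_compat; [apply Rmult_lt_0_compat |]; lra. }
  exists (mkposreal _ Hdelta); simpl; intros x y Hx Hy.
  unfold rel_close; rewrite !Hl_aff; fold l0.
  replace (c + p * x + q * y - l0) with (p * (x - x0) + q * (y - y0)) by (unfold l0; ring).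
  eapply Rle_trans; [apply Rabs_triang |]. rewrite !Rabs_mult.
  set (delta := d * l0 / (Rabs p + Rabs q + 1)) in *.
  assert (Hsum : (Rabs p + Rabs q) * delta <= d * l0).
  { replace (d * l0) with ((Rabs p + Rabs q + 1) * delta) by (unfold delta; field; lra).
    nra. }
  nra.
Qed.

(* The open region where all six arguments of g in phi are positive, so that
   phi is given by a smooth formula there. *)
Definition args_pos (r s a b : R) : Prop :=
  0 < a + b /\ 0 < r - 1 - a - b /\ 0 < a /\ 0 < b /\
  0 < r * s - r - s - s * b /\ 0 < 1 - (s - 1) * a - b.

Definition args_close (r s d a0 b0 a b : R) : Prop :=
  rel_close d (a0 + b0) (a + b) /\ rel_close d (r - 1 - a0 - b0) (r - 1 - a - b) /\
  rel_close d a0 a /\ rel_close d b0 b /\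
  rel_close d (r * s - r - s - s * b0) (r * s - r - s - s * b) /\
  rel_close d (1 - (s - 1) * a0 - b0) (1 - (s - 1) * a - b).

Lemma args_pos_of_args_close (r s d a0 b0 a b : R) :
  d < 1 -> args_pos r s a0 b0 -> args_close r s d a0 b0 a b -> args_pos r s a b.
Proof.
  intros Hd (P1 & P2 & P3 & P4 & P5 & P6) (C1 & C2 & C3 & C4 & C5 & C6).
  repeat split;
    [ apply (rel_close_pos d _ _ P1) | apply (rel_close_pos d _ _ P2)
    | apply (rel_close_pos d _ _ P3) | apply (rel_close_pos d _ _ P4)
    | apply (rel_close_pos d _ _ P5) | apply (rel_close_pos d _ _ P6) ]; assumption.
Qed.

Lemma args_close_locally (r s d a0 b0 : R) :
  0 < d -> args_pos r s a0 b0 -> locally_2d (args_close r s d a0 b0) a0 b0.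
Proof.
  intros Hd (P1 & P2 & P3 & P4 & P5 & P6).
  repeat apply locally_2d_and.
  - apply (locally_2d_rel_close (fun a b => a + b) 0 1 1); auto; intros; ring.
  - apply (locally_2d_rel_close (fun a b => r - 1 - a - b) (r - 1) (-1) (-1)); auto;
      intros; ring.
  - apply (locally_2d_rel_close (fun a b => a) 0 1 0); auto; intros; ring.
  - apply (locally_2d_rel_close (fun a b => b) 0 0 1); auto; intros; ring.
  - apply (locally_2d_rel_close (fun a b => r * s - r - s - s * b) (r * s - r - s) 0 (-s));
      auto; intros; ring.
  - apply (locally_2d_rel_close (fun a b => 1 - (s - 1) * a - b) 1 (-(s - 1)) (-1));
      auto; intros; ring.
Qed.

Lemma args_pos_locally (r s a b : R) :
  args_pos r s a b -> locally_2d (args_pos r s) a b.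
Proof.
  intros Hab. eapply locally_2d_impl; [| apply (args_close_locally r s (1 / 2)); auto; lra].
  apply locally_2d_forall; intros; eapply args_pos_of_args_close; eauto; lra.
Qed.

Definition phi_smooth (r s a b : R) : R :=
  (a + b) * ln (r - 1) + (a + b) * ln (a + b) + (r - 1 - a - b) * ln (r - 1 - a - b)
  - (2 / (s - 1)) * (b * ln b) - a * ln a
  - (1 / (s * (s - 1))) * ((r * s - r - s - s * b) * ln (r * s - r - s - s * b))
  - (1 / (s - 1)) * ((1 - (s - 1) * a - b) * ln (1 - (s - 1) * a - b)).

Definition phi_da (r s a b : R) : R :=
  ln (r - 1) + ln (a + b) - ln (r - 1 - a - b) - ln a + ln (1 - (s - 1) * a - b).

Definition phi_db (r s a b : R) : R :=
  ln (r - 1) + ln (a + b) - ln (r - 1 - a - b) - 2 / (s - 1) * (ln b + 1)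
  + 1 / (s - 1) * (ln (r * s - r - s - s * b) + 1)
  + 1 / (s - 1) * (ln (1 - (s - 1) * a - b) + 1).

(* The two convex terms g(a+b), g(r-1-a-b) contribute curv_pos * (u+v)^2 to
   the Hessian quadratic form; the four concave terms contribute -curv_neg. *)
Definition curv_pos (r a b : R) : R := 1 / (a + b) + 1 / (r - 1 - a - b).

Definition curv_neg (r s a b u v : R) : R :=
  u ^ 2 / a + 2 / (s - 1) * (v ^ 2 / b)
  + 1 / (s * (s - 1)) * ((s * v) ^ 2 / (r * s - r - s - s * b))
  + 1 / (s - 1) * (((s - 1) * u + v) ^ 2 / (1 - (s - 1) * a - b)).

Definition phi_daa (r s a b : R) : R :=
  curv_pos r a b - 1 / a - (s - 1) / (1 - (s - 1) * a - b).
Definition phi_dab (r s a b : R) : R :=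
  curv_pos r a b - 1 / (1 - (s - 1) * a - b).
Definition phi_dbb (r s a b : R) : R :=
  curv_pos r a b - 2 / ((s - 1) * b) - s / ((s - 1) * (r * s - r - s - s * b))
  - 1 / ((s - 1) * (1 - (s - 1) * a - b)).

Section PhiCalculus.

Variables r s : R.
Hypothesis Hs : 1 < s.

Lemma phi_eq_smooth (a b : R) : args_pos r s a b -> phi r s a b = phi_smooth r s a b.
Proof.
  intros (H1 & H2 & H3 & H4 & H5 & H6). unfold phi, phi_smooth, g.
  repeat match goal with |- context [Rlt_dec ?x ?y] =>
    destruct (Rlt_dec x y); [| exfalso; lra] end.
  reflexivity.
Qed.

Lemma args_pos_locally_a (a b : R) :
  args_pos r s a b -> locally a (fun x => args_pos r s x b).
Proof. intros H; apply locally_2d_1d_const_y, args_pos_locally, H. Qed.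

Lemma args_pos_locally_b (a b : R) :
  args_pos r s a b -> locally b (fun y => args_pos r s a y).
Proof. intros H; apply locally_2d_1d_const_x, args_pos_locally, H. Qed.

Lemma Derive_phi_a (a b : R) :
  args_pos r s a b -> Derive (fun x => phi r s x b) a = phi_da r s a b.
Proof.
  intros P.
  rewrite (Derive_ext_loc _ (fun x => phi_smooth r s x b)).
  2: { apply (filter_imp (fun x => args_pos r s x b)); [intros; apply phi_eq_smooth; auto |].
       apply args_pos_locally_a, P. }
  apply is_derive_unique. destruct P as (H1 & H2 & H3 & H4 & H5 & H6).
  unfold phi_smooth, phi_da. auto_derive; [repeat split; lra |].
  replace (r - 1 + - a + - b) with (r - 1 - a - b) by ring.
  replace (1 + - ((s - 1) * a) + - b) with (1 - (s - 1) * a - b) by ring.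
  field; lra.
Qed.

Lemma Derive_phi_b (a b : R) :
  args_pos r s a b -> Derive (fun y => phi r s a y) b = phi_db r s a b.
Proof.
  intros P.
  rewrite (Derive_ext_loc _ (fun y => phi_smooth r s a y)).
  2: { apply (filter_imp (fun y => args_pos r s a y)); [intros; apply phi_eq_smooth; auto |].
       apply args_pos_locally_b, P. }
  apply is_derive_unique. destruct P as (H1 & H2 & H3 & H4 & H5 & H6).
  unfold phi_smooth, phi_db. auto_derive; [repeat split; lra |].
  replace (r - 1 - a + - b) with (r - 1 - a - b) by ring.
  replace (r * s - r - s + - (s * b)) with (r * s - r - s - s * b) by ring.
  replace (1 - (s - 1) * a + - b) with (1 - (s - 1) * a - b) by ring.
  field; lra.
Qed.

Lemma d_aa_phi (a b : R) : args_pos r s a b -> d_aa (phi r s) a b = phi_daa r s a b.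
Proof.
  intros P. unfold d_aa.
  rewrite (Derive_ext_loc _ (fun x => phi_da r s x b)).
  2: { apply (filter_imp (fun x => args_pos r s x b)); [intros; apply Derive_phi_a; auto |].
       apply args_pos_locally_a, P. }
  apply is_derive_unique. destruct P as (H1 & H2 & H3 & H4 & H5 & H6).
  unfold phi_da, phi_daa, curv_pos. auto_derive; [repeat split; lra | field; repeat split; lra].
Qed.

Lemma d_ab_phi (a b : R) : args_pos r s a b -> d_ab (phi r s) a b = phi_dab r s a b.
Proof.
  intros P. unfold d_ab.
  rewrite (Derive_ext_loc _ (fun y => phi_da r s a y)).
  2: { apply (filter_imp (fun y => args_pos r s a y)); [intros; apply Derive_phi_a; auto |].
       apply args_pos_locally_b, P. }
  apply is_derive_unique. destruct P as (H1 & H2 & H3 & H4 & H5 & H6).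
  unfold phi_da, phi_dab, curv_pos. auto_derive; [repeat split; lra | field; repeat split; lra].
Qed.

Lemma d_ba_phi (a b : R) : args_pos r s a b -> d_ba (phi r s) a b = phi_dab r s a b.
Proof.
  intros P. unfold d_ba.
  rewrite (Derive_ext_loc _ (fun x => phi_db r s x b)).
  2: { apply (filter_imp (fun x => args_pos r s x b)); [intros; apply Derive_phi_b; auto |].
       apply args_pos_locally_a, P. }
  apply is_derive_unique. destruct P as (H1 & H2 & H3 & H4 & H5 & H6).
  unfold phi_db, phi_dab, curv_pos. auto_derive; [repeat split; lra | field; repeat split; lra].
Qed.

Lemma d_bb_phi (a b : R) : args_pos r s a b -> d_bb (phi r s) a b = phi_dbb r s a b.
Proof.
  intros P. unfold d_bb.
  rewrite (Derive_ext_loc _ (fun y => phi_db r s a y)).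
  2: { apply (filter_imp (fun y => args_pos r s a y)); [intros; apply Derive_phi_b; auto |].
       apply args_pos_locally_b, P. }
  apply is_derive_unique. destruct P as (H1 & H2 & H3 & H4 & H5 & H6).
  unfold phi_db, phi_dbb, curv_pos. auto_derive; [repeat split; lra | field; repeat split; lra].
Qed.

Lemma hessian_quadratic_form (a b u v : R) :
  args_pos r s a b ->
  u * u * d_aa (phi r s) a b + u * v * d_ab (phi r s) a b
  + v * u * d_ba (phi r s) a b + v * v * d_bb (phi r s) a b
  = curv_pos r a b * (u + v) ^ 2 - curv_neg r s a b u v.
Proof.
  intros P. rewrite d_aa_phi, d_ab_phi, d_ba_phi, d_bb_phi by exact P.
  destruct P as (H1 & H2 & H3 & H4 & H5 & H6).
  unfold phi_daa, phi_dab, phi_dbb, curv_neg. field; repeat split; lra.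
Qed.

End PhiCalculus.

Definition bregman_sum (r s a0 b0 a b : R) : R :=
  xlnx_bregman (a0 + b0) (a + b) + xlnx_bregman (r - 1 - a0 - b0) (r - 1 - a - b)
  - xlnx_bregman a0 a - 2 / (s - 1) * xlnx_bregman b0 b
  - 1 / (s * (s - 1)) * xlnx_bregman (r * s - r - s - s * b0) (r * s - r - s - s * b)
  - 1 / (s - 1) * xlnx_bregman (1 - (s - 1) * a0 - b0) (1 - (s - 1) * a - b).

Definition curvature_gap (r s a0 b0 M : R) : Prop :=
  curv_pos r a0 b0 < M /\ forall u v, M * (u + v) ^ 2 <= curv_neg r s a0 b0 u v.

Section LocalAnalysis.

Variables r s : R.
Hypothesis Hs : 1 < s.

Lemma phi_bregman_expansion (a0 b0 a b : R) :
  args_pos r s a0 b0 -> args_pos r s a b ->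
  phi r s a b - phi r s a0 b0
  = (a - a0) * phi_da r s a0 b0 + (b - b0) * phi_db r s a0 b0 + bregman_sum r s a0 b0 a b.
Proof.
  intros P0 P.
  rewrite (phi_eq_smooth r s a b P), (phi_eq_smooth r s a0 b0 P0).
  unfold phi_smooth, phi_da, phi_db, bregman_sum, xlnx_bregman.
  field; lra.
Qed.

(* Bounding the convex terms from above and the concave ones from below. *)
Lemma bregman_sum_bound (d a0 b0 a b : R) :
  args_pos r s a0 b0 -> 0 <= d < 1 -> args_close r s d a0 b0 a b ->
  bregman_sum r s a0 b0 a b
  <= curv_pos r a0 b0 * (a - a0 + (b - b0)) ^ 2 / (2 - d)
     - curv_neg r s a0 b0 (a - a0) (b - b0) / (2 + d).
Proof.
  intros P0 Hd (C1 & C2 & C3 & C4 & C5 & C6).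
  pose proof P0 as (H1 & H2 & H3 & H4 & H5 & H6).
  destruct (xlnx_bregman_bounds _ _ _ H1 Hd C1) as [_ E1].
  destruct (xlnx_bregman_bounds _ _ _ H2 Hd C2) as [_ E2].
  destruct (xlnx_bregman_bounds _ _ _ H3 Hd C3) as [E3 _].
  destruct (xlnx_bregman_bounds _ _ _ H4 Hd C4) as [E4 _].
  destruct (xlnx_bregman_bounds _ _ _ H5 Hd C5) as [E5 _].
  destruct (xlnx_bregman_bounds _ _ _ H6 Hd C6) as [E6 _].
  assert (Hc1 : 0 <= 2 / (s - 1)) by (apply Rlt_le, Rdiv_lt_0_compat; lra).
  assert (Hc2 : 0 <= 1 / (s * (s - 1))) by (apply Rlt_le, Rdiv_lt_0_compat; nra).
  assert (Hc3 : 0 <= 1 / (s - 1)) by (apply Rlt_le, Rdiv_lt_0_compat; lra).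
  apply (Rmult_le_compat_l _ _ _ Hc1) in E4.
  apply (Rmult_le_compat_l _ _ _ Hc2) in E5.
  apply (Rmult_le_compat_l _ _ _ Hc3) in E6.
  assert (Hpos : curv_pos r a0 b0 * (a - a0 + (b - b0)) ^ 2 / (2 - d)
    = (a + b - (a0 + b0)) ^ 2 / ((2 - d) * (a0 + b0))
      + (r - 1 - a - b - (r - 1 - a0 - b0)) ^ 2 / ((2 - d) * (r - 1 - a0 - b0)))
    by (unfold curv_pos; field; lra).
  assert (Hneg : curv_neg r s a0 b0 (a - a0) (b - b0) / (2 + d)
    = (a - a0) ^ 2 / ((2 + d) * a0) + 2 / (s - 1) * ((b - b0) ^ 2 / ((2 + d) * b0))
      + 1 / (s * (s - 1)) * ((r * s - r - s - s * b - (r * s - r - s - s * b0)) ^ 2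
                              / ((2 + d) * (r * s - r - s - s * b0)))
      + 1 / (s - 1) * ((1 - (s - 1) * a - b - (1 - (s - 1) * a0 - b0)) ^ 2
                        / ((2 + d) * (1 - (s - 1) * a0 - b0))))
    by (unfold curv_neg; field; lra).
  unfold bregman_sum. lra.
Qed.

Lemma curv_pos_pos (a b : R) : args_pos r s a b -> 0 < curv_pos r a b.
Proof.
  intros (H1 & H2 & _). unfold curv_pos.
  assert (0 < 1 / (a + b)) by (apply Rdiv_lt_0_compat; lra).
  assert (0 < 1 / (r - 1 - a - b)) by (apply Rdiv_lt_0_compat; lra). lra.
Qed.

Lemma curv_neg_pos (a b u v : R) :
  args_pos r s a b -> (u, v) <> (0, 0) -> 0 < curv_neg r s a b u v.
Proof.
  intros (_ & _ & H3 & H4 & H5 & H6) Huv. unfold curv_neg.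
  assert (Hsq : forall x y, 0 < y -> 0 <= x ^ 2 / y).
  { intros x y Hy. apply Rmult_le_pos; [apply pow2_ge_0 | apply Rlt_le, Rinv_0_lt_compat, Hy]. }
  assert (Hc1 : 0 < 2 / (s - 1)) by (apply Rdiv_lt_0_compat; lra).
  assert (Hc2 : 0 <= 1 / (s * (s - 1))) by (apply Rlt_le, Rdiv_lt_0_compat; nra).
  assert (Hc3 : 0 <= 1 / (s - 1)) by (apply Rlt_le, Rdiv_lt_0_compat; lra).
  pose proof (Rmult_le_pos _ _ Hc2 (Hsq (s * v) _ H5)).
  pose proof (Rmult_le_pos _ _ Hc3 (Hsq ((s - 1) * u + v) _ H6)).
  destruct (Req_dec u 0) as [-> | Hu].
  - assert (Hv : v <> 0) by (intros ->; apply Huv; reflexivity).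
    assert (0 < v ^ 2 / b) by (apply Rdiv_lt_0_compat; [apply pow2_gt_0 |]; assumption).
    pose proof (Hsq 0 _ H3). nra.
  - assert (0 < u ^ 2 / a) by (apply Rdiv_lt_0_compat; [apply pow2_gt_0 |]; assumption).
    pose proof (Rmult_le_pos _ _ (Rlt_le _ _ Hc1) (Hsq v _ H4)). lra.
Qed.

(* A relative tolerance d for which the factors 2 -+ d do not close the gap. *)
Lemma gap_ratio (h M : R) :
  0 < h < M ->
  let d := (M - h) / (M + h) in 0 <= d < 1 /\ h * (2 + d) <= M * (2 - d).
Proof.
  intros Hh d; subst d.
  assert (HMh : 0 < M + h) by lra.
  split; [split |].
  - apply Rlt_le, Rdiv_lt_0_compat; lra.
  - apply Rmult_lt_reg_r with (M + h); [exact HMh |].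
    field_simplify; lra.
  - apply Rmult_le_reg_r with (M + h); [exact HMh |].
    replace (h * (2 + (M - h) / (M + h)) * (M + h)) with (h * (3 * M + h)) by (field; lra).
    replace (M * (2 - (M - h) / (M + h)) * (M + h)) with (M * (M + 3 * h)) by (field; lra).
    nra.
Qed.

Theorem local_max_of_curvature_gap (a0 b0 M : R) :
  args_pos r s a0 b0 -> phi_da r s a0 b0 = 0 -> phi_db r s a0 b0 = 0 ->
  curvature_gap r s a0 b0 M ->
  locally_2d (fun a b => phi r s a b <= phi r s a0 b0) a0 b0.
Proof.
  intros P0 Ha Hb [HhM HN].
  set (h := curv_pos r a0 b0) in *.
  assert (Hh : 0 < h) by exact (curv_pos_pos a0 b0 P0).
  destruct (gap_ratio h M (conj Hh HhM)) as [Hd Hratio].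
  set (d := (M - h) / (M + h)) in *.
  assert (Hdpos : 0 < d) by (apply Rdiv_lt_0_compat; lra).
  eapply locally_2d_impl; [| exact (args_close_locally r s d a0 b0 Hdpos P0)].
  apply locally_2d_forall; intros a b Hclose.
  pose proof (args_pos_of_args_close r s d a0 b0 a b (proj2 Hd) P0 Hclose) as P.
  assert (Hdiff := phi_bregman_expansion a0 b0 a b P0 P).
  rewrite Ha, Hb in Hdiff.
  pose proof (bregman_sum_bound d a0 b0 a b P0 Hd Hclose) as Hbound. fold h in Hbound.
  set (w := a - a0 + (b - b0)) in *.
  set (N := curv_neg r s a0 b0 (a - a0) (b - b0)) in *.
  assert (Hw : 0 <= w ^ 2) by apply pow2_ge_0.
  assert (HNw : M * w ^ 2 <= N) by apply HN.
  assert (Hkey : h * w ^ 2 / (2 - d) <= N / (2 + d)).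
  { apply Rmult_le_reg_r with ((2 - d) * (2 + d)); [nra |].
    replace (h * w ^ 2 / (2 - d) * ((2 - d) * (2 + d))) with (h * (2 + d) * w ^ 2)
      by (field; lra).
    replace (N / (2 + d) * ((2 - d) * (2 + d))) with ((2 - d) * N) by (field; lra).
    nra. }
  lra.
Qed.

Theorem hessian_neg_of_curvature_gap (a0 b0 M : R) :
  args_pos r s a0 b0 -> curvature_gap r s a0 b0 M -> hessian_neg_def (phi r s) a0 b0.
Proof.
  intros P0 [HhM HN] u v Huv.
  rewrite (hessian_quadratic_form r s Hs a0 b0 u v P0).
  pose proof (curv_pos_pos a0 b0 P0). pose proof (curv_neg_pos a0 b0 u v P0 Huv).
  pose proof (HN u v). pose proof (pow2_ge_0 (u + v)). nra.
Qed.

End LocalAnalysis.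

(* The polynomial whose positivity is the curvature gap at (alpha0, beta0). *)
Definition gap_poly (r s : R) : R :=
  (r - 1) ^ 2 * (s - 1) * (r * (s - 1) - 1) - 1 - (s - 2) * (r * s - r - s) ^ 2.

Section CriticalPoint.

Variables r s : R.
Hypothesis Hr : 2 <= r.
Hypothesis Hs : 2 <= s.
Hypothesis Hm : 0 < r * s - r - s.
Hypothesis Hgap : 0 < gap_poly r s.

Let a0 := 1 / (r * (s - 1)).
Let b0 := (r * s - r - s) / (r * (s - 1)).
Let m := r * s - r - s.

Lemma rs1_pos : 0 < r * (s - 1).
Proof. apply Rmult_lt_0_compat; lra. Qed.

Lemma arg_A0 : a0 + b0 = (r - 1) / r.
Proof. unfold a0, b0. field. lra. Qed.
Lemma arg_B0 : r - 1 - a0 - b0 = (r - 1) ^ 2 / r.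
Proof. unfold a0, b0. field. lra. Qed.
Lemma arg_C0 : r * s - r - s - s * b0 = m ^ 2 / (r * (s - 1)).
Proof. unfold a0, b0, m. field. lra. Qed.
Lemma arg_D0 : 1 - (s - 1) * a0 - b0 = a0.
Proof. unfold a0, b0. field. lra. Qed.

Lemma critical_args_pos : args_pos r s a0 b0.
Proof.
  pose proof rs1_pos.
  assert (Ha0 : 0 < a0) by (apply Rdiv_lt_0_compat; lra).
  assert (Hb0 : 0 < b0) by (apply Rdiv_lt_0_compat; lra).
  unfold args_pos. rewrite arg_A0, arg_B0, arg_C0, arg_D0.
  repeat split; auto; apply Rdiv_lt_0_compat; try apply pow_lt; unfold m; lra.
Qed.

Lemma critical_point : phi_da r s a0 b0 = 0 /\ phi_db r s a0 b0 = 0.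
Proof.
  pose proof critical_args_pos as (HA & HB & Ha0 & Hb0 & HC & HD).
  assert (L1 : ln (r - 1) + ln (a0 + b0) = ln (r - 1 - a0 - b0)).
  { rewrite <- ln_mult by lra. f_equal. rewrite arg_A0, arg_B0. field. lra. }
  assert (L2 : ln (r * s - r - s - s * b0) + ln a0 = 2 * ln b0).
  { rewrite <- !ln_mult by lra. replace (2 * ln b0) with (ln b0 + ln b0) by ring.
    rewrite <- ln_mult by lra. f_equal. rewrite arg_C0. unfold a0, b0, m. field. lra. }
  unfold phi_da, phi_db. rewrite arg_D0. split.
  - lra.
  - match goal with |- ?lhs = 0 =>
      replace lhs with (ln (r - 1) + ln (a0 + b0) - ln (r - 1 - a0 - b0)
        + 1 / (s - 1) * (ln (r * s - r - s - s * b0) + ln a0 - 2 * ln b0)) by (field; lra)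
    end.
    rewrite L1, L2. ring.
Qed.

Let p := r * (s - 1) * s.
Let t := r * (s - 1).
Let w := r * (1 + 2 / m + s / m ^ 2).

Lemma curv_neg_critical (u v : R) :
  curv_neg r s a0 b0 u v = p * u ^ 2 + 2 * t * u * v + w * v ^ 2.
Proof. unfold curv_neg, a0, b0, p, t, w, m. field. repeat split; nra. Qed.

Lemma curv_pos_critical : curv_pos r a0 b0 = r / (r - 1) + r / (r - 1) ^ 2.
Proof. unfold curv_pos, a0, b0. field. repeat split; nra. Qed.

Lemma form_den_pos : 0 < p + w - 2 * t.
Proof.
  assert (0 < 2 / m) by (apply Rdiv_lt_0_compat; unfold m; lra).
  assert (0 < s / m ^ 2) by (apply Rdiv_lt_0_compat; [lra | apply pow_lt; unfold m; lra]).
  assert (0 < w) by (unfold w; apply Rmult_lt_0_compat; lra).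
  assert (p - 2 * t = r * (s - 1) * (s - 2)) by (unfold p, t; ring).
  assert (0 <= r * (s - 1) * (s - 2)) by (apply Rmult_le_pos; [apply Rmult_le_pos |]; lra).
  lra.
Qed.

Let M := (p * w - t ^ 2) / (p + w - 2 * t).

(* M is the minimum of that form on the line u + v = 1. *)
Lemma form_min_on_lines (u v : R) :
  M * (u + v) ^ 2 <= p * u ^ 2 + 2 * t * u * v + w * v ^ 2.
Proof.
  pose proof form_den_pos.
  assert (Id : (p * u ^ 2 + 2 * t * u * v + w * v ^ 2) * (p + w - 2 * t)
               - (p * w - t ^ 2) * (u + v) ^ 2 = ((p - t) * u - (w - t) * v) ^ 2) by ring.
  pose proof (pow2_ge_0 ((p - t) * u - (w - t) * v)).
  apply Rmult_le_reg_r with (p + w - 2 * t); [assumption |].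
  unfold M. replace ((p * w - t ^ 2) / (p + w - 2 * t) * (u + v) ^ 2 * (p + w - 2 * t))
    with ((p * w - t ^ 2) * (u + v) ^ 2) by (field; lra).
  lra.
Qed.

Lemma gap_identity :
  (p * w - t ^ 2) - curv_pos r a0 b0 * (p + w - 2 * t)
  = (s - 1) * gap_poly r s * r ^ 3 / (m ^ 2 * (r - 1) ^ 2).
Proof. rewrite curv_pos_critical. unfold gap_poly, p, w, t, m. field. repeat split; nra. Qed.

Lemma critical_curvature_gap : curvature_gap r s a0 b0 M.
Proof.
  split; [| intros u v; rewrite curv_neg_critical; apply form_min_on_lines].
  assert (Hpos : 0 < (p * w - t ^ 2) - curv_pos r a0 b0 * (p + w - 2 * t)).
  { rewrite gap_identity. apply Rdiv_lt_0_compat.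
    - apply Rmult_lt_0_compat; [apply Rmult_lt_0_compat; lra |]. apply pow_lt; lra.
    - apply Rmult_lt_0_compat; apply pow_lt; unfold m; lra. }
  pose proof form_den_pos. unfold M.
  apply Rmult_lt_reg_r with (p + w - 2 * t); [assumption |].
  unfold Rdiv. rewrite Rmult_assoc, Rinv_l by lra. lra.
Qed.

Lemma critical_inK : inK s a0 b0.
Proof.
  pose proof critical_args_pos as (_ & _ & Ha0 & Hb0 & _).
  pose proof arg_D0. unfold inK. lra.
Qed.

End CriticalPoint.

(* gap_poly is positive in the admissible parameter ranges: after shifting
   to the corner of the range it is a polynomial with positive coefficients. *)
Lemma gap_poly_pos_large (r s : R) : 5 <= s -> s - 1 <= r -> 0 < gap_poly r s.
Proof.
  intros Hs Hr.
  set (j := s - 5). set (k := r - s + 1).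
  assert (Hj : 0 <= j) by (unfold j; lra).
  assert (Hk : 0 <= k) by (unfold k; lra).
  replace (gap_poly r s) with
    (176 + 240*k + 108*k^2 + 16*k^3 + 200*j + 248*j*k + 87*j*k^2 + 8*j*k^3
     + 83*j^2 + 95*j^2*k + 23*j^2*k^2 + j^2*k^3 + 15*j^3 + 16*j^3*k + 2*j^3*k^2
     + j^4 + j^4*k)
    by (unfold gap_poly, j, k; ring).
  repeat first [ apply Rplus_lt_le_0_compat | apply Rmult_le_pos | apply pow_le | lra ].
Qed.

Lemma gap_poly_pos_small (r s : R) :
  (s = 2 /\ 3 <= r) \/ (s = 3 /\ 2 <= r) \/ (s = 4 /\ 2 <= r) -> 0 < gap_poly r s.
Proof.
  intros [[-> H] | [[-> H] | [-> H]]]; set (k := r - 2) in *;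
    assert (Hk : 0 <= k) by (unfold k; lra).
  - replace (gap_poly r 2) with (7 + 12 * (k - 1) + 6 * (k - 1) ^ 2 + (k - 1) ^ 3)
      by (unfold gap_poly, k; ring).
    assert (0 <= k - 1) by (unfold k; lra).
    repeat first [ apply Rplus_lt_le_0_compat | apply Rmult_le_pos | apply pow_le | lra ].
  - replace (gap_poly r 3) with (4 + 12 * k + 10 * k ^ 2 + 4 * k ^ 3)
      by (unfold gap_poly, k; ring).
    repeat first [ apply Rplus_lt_le_0_compat | apply Rmult_le_pos | apply pow_le | lra ].
  - replace (gap_poly r 4) with (6 + 15 * k + 15 * k ^ 2 + 9 * k ^ 3)
      by (unfold gap_poly, k; ring).
    repeat first [ apply Rplus_lt_le_0_compat | apply Rmult_le_pos | apply pow_le | lra ].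
Qed.

Lemma parameter_conditions (r s : nat)
  (hs : (2 <= s)%nat) (hr : (2 <= r)%nat)
  (hs2 : s = 2%nat -> (3 <= r)%nat)
  (hs5 : (5 <= s)%nat -> (s - 1 <= r)%nat) :
  2 <= INR r /\ 2 <= INR s /\ 0 < INR r * INR s - INR r - INR s /\
  0 < gap_poly (INR r) (INR s).
Proof.
  assert (Hr : 2 <= INR r) by (apply le_INR in hr; simpl in hr; lra).
  assert (Hs : 2 <= INR s) by (apply le_INR in hs; simpl in hs; lra).
  assert (Hcases : (s = 2 \/ s = 3 \/ s = 4 \/ 5 <= s)%nat) by lia.
  destruct Hcases as [-> | [-> | [-> | H5]]].
  - specialize (hs2 eq_refl). apply le_INR in hs2. simpl in hs2 |- *.
    repeat split; try lra. apply gap_poly_pos_small. left. split; [ring | lra].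
  - simpl. repeat split; try lra. apply gap_poly_pos_small. right; left. split; [ring | lra].
  - simpl. repeat split; try lra. apply gap_poly_pos_small. right; right. split; [ring | lra].
  - specialize (hs5 H5). apply le_INR in hs5. rewrite minus_INR in hs5 by lia.
    apply le_INR in H5. simpl in H5, hs5.
    repeat split; try lra. nra. apply gap_poly_pos_large; lra.
Qed.

Theorem lemmaA3 (r s : nat)
  (hs : (2 <= s)%nat) (hr : (2 <= r)%nat)
  (hs2 : s = 2%nat -> (3 <= r)%nat)
  (hs5 : (5 <= s)%nat -> (s - 1 <= r)%nat) :
  let rR := INR r in
  let sR := INR s in
  let a0 := 1 / (rR * (sR - 1)) in
  let b0 := (rR * sR - rR - sR) / (rR * (sR - 1)) in
  inK sR a0 b0 /\
  (exists eps : R, 0 < eps /\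
     forall a b : R, inK sR a b ->
       Rabs (a - a0) < eps -> Rabs (b - b0) < eps ->
       phi rR sR a b <= phi rR sR a0 b0) /\
  hessian_neg_def (phi rR sR) a0 b0.
Proof.
  destruct (parameter_conditions r s hs hr hs2 hs5) as (Hr & Hs & Hm & Hgap).
  intros rR sR a0 b0.
  assert (Hs1 : 1 < sR) by (unfold sR; lra).
  pose proof (critical_args_pos rR sR Hr Hs Hm) as P0.
  pose proof (critical_curvature_gap rR sR Hr Hs Hm Hgap) as Hcurv.
  destruct (critical_point rR sR Hr Hs Hm) as [Hda Hdb].
  split; [| split].
  - exact (critical_inK rR sR Hr Hs Hm).
  - destruct (local_max_of_curvature_gap rR sR Hs1 a0 b0 _ P0 Hda Hdb Hcurv)
      as [eps Heps].
    exists eps. split; [apply cond_pos |]. intros a b _. apply Heps.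
  - exact (hessian_neg_of_curvature_gap rR sR Hs1 a0 b0 _ P0 Hcurv).
Qed.
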